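(* Let $X$ be an $n$-dimensional random vector with $X\le_{\mathrm{cx}}\mathcal N(\mu,\sigma^2I)$, and let $\alpha>0$. Then $$\mathrm P(\|X-\mu\|_\infty\le\alpha)\ge1-\sqrt2\,n\,e^{-\alpha^2/(4\sigma^2)}.$$ In particular, for $\gamma\in(0,1]$, $\mathrm P\bigl(\|X-\mu\|_\infty\le2\sigma\sqrt{\log(\sqrt2n/\gamma)}\bigr)\ge1-\gamma$.
   Context: For random vectors $X,Y$ in $\mathbb R^n$, $X\le_{\mathrm{cx}}Y$ (convex order) means $\mathbb Ef(X)\le\mathbb Ef(Y)$ for all convex $f:\mathbb R^n\to\mathbb R$ for which the expectations exist; a distribution on the right denotes a random vector with that distribution. *)

From HB Require Import structures.
From mathcomp Require Import all_boot all_order all_algebra.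
From mathcomp Require Import all_classical all_reals all_analysis.
Set Implicit Arguments. Unset Strict Implicit. Unset Printing Implicit Defensive.
Import Order.TTheory GRing.Theory Num.Theory.
Import numFieldNormedType.Exports.
Local Open Scope classical_set_scope.
Local Open Scope ring_scope.

Definition random_vector {d} {T : measurableType d} {R : realType} {n : nat}
    (X : T -> 'rV[R]_n) : Prop :=
  forall i : 'I_n, measurable_fun setT (fun t => X t ord0 i).

(* E[g] exists (possibly infinite): g is measurable and at least one of the
   integrals of the positive part and the negative part is finite. *)
Definition expectation_exists {d} {T : measurableType d} {R : realType}
    (P : probability T R) (g : T -> R) : Prop :=
  measurable_fun setT g /\
  ((\int[P]_x (g^\+ x)%:E < +oo)%E \/ (\int[P]_x (g^\- x)%:E < +oo)%E).

Definition cx_le {d d'} {T : measurableType d} {T' : measurableType d'}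
    {R : realType} {n : nat}
    (P : probability T R) (X : T -> 'rV[R]_n)
    (Q : probability T' R) (Y : T' -> 'rV[R]_n) : Prop :=
  forall f : 'rV[R]_n -> R,
    convex_function setT f ->
    expectation_exists P (fun t => f (X t)) ->
    expectation_exists Q (fun t => f (Y t)) ->
    (\int[P]_t (f (X t))%:E <= \int[Q]_t (f (Y t))%:E)%E.

(* Y has law N(mu, sigma^2 I): its coordinates are independent, the i-th one
   being normal with mean mu_i and standard deviation sigma
   (product rule on all Borel rectangles, which determines the law). *)
Definition gaussian_iso_law {d} {T : measurableType d} {R : realType} {n : nat}
    (Q : probability T R) (Y : T -> 'rV[R]_n) (mu : 'rV[R]_n) (sigma : R) : Prop :=
  random_vector Y /\
  forall A : 'I_n -> set R, (forall i, measurable (A i)) ->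
    Q [set t | forall i, A i (Y t ord0 i)] =
      (\prod_(i < n) normal_prob (mu ord0 i) sigma (A i))%E.

From HB Require Import structures.
From mathcomp Require Import all_boot all_order all_algebra.
From mathcomp Require Import all_classical all_reals all_analysis.
From mathcomp Require Import measurable_realfun unstable ring.
Set Implicit Arguments. Unset Strict Implicit. Unset Printing Implicit Defensive.
Import Order.TTheory GRing.Theory Num.Theory.
Import numFieldNormedType.Exports.
Local Open Scope classical_set_scope.
Local Open Scope ring_scope.

(* The potential F(x) = sum_i exp((x_i - mu_i)^2 / (4 sigma^2)) is convex, so the
   convex order gives E F(X) <= E F(Y).  Tilting the N(m, sigma^2) density by
   exp((x - m)^2 / (4 sigma^2)) yields sqrt 2 times the N(m, 2 sigma^2) density,
   hence E F(Y) = sqrt 2 n.  Outside the sup-norm ball of radius alpha around mu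
   one coordinate alone makes F >= exp(alpha^2 / (4 sigma^2)), and Markov's
   inequality concludes; the second claim is the first at
   alpha = 2 sigma sqrt(ln(sqrt 2 n / gamma)). *)

Section integral_density.
Context d (T : measurableType d) (R : realType).
Variables (mu nu : {measure set T -> \bar R}) (p : T -> R).
Hypotheses (p_ge0 : forall x, 0 <= p x) (mp : measurable_fun setT p).
Hypothesis nuE : forall A, measurable A -> nu A = (\int[mu]_(x in A) (p x)%:E)%E.
Local Open Scope ereal_scope.

Let mEp : measurable_fun setT (EFin \o p).
Proof. exact/measurable_EFinP. Qed.

Let integral_density_indic (A : set T) : measurable A ->
  \int[nu]_x (\1_A x)%:E = \int[mu]_x ((\1_A x)%:E * (p x)%:E).
Proof.
move=> mA; rewrite integral_indic// setIT nuE// integral_mkcond.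
by apply: eq_integral => x _; rewrite patchE indicE; case: ifPn; rewrite ?mul1e ?mul0e.
Qed.

Import HBNNSimple.

Let integral_density_nnsfun (f : {nnsfun T >-> R}) :
  \int[nu]_x (f x)%:E = \int[mu]_x ((f x)%:E * (p x)%:E).
Proof.
under [LHS]eq_integral do rewrite fimfunE -fsumEFin//.
rewrite [LHS]ge0_integral_fsum//; last 2 first.
  - by move=> r; apply/measurable_EFinP; exact: measurable_funM.
  - by move=> r x _; rewrite nnfun_muleindic_ge0.
under [RHS]eq_integral => x _.
  rewrite fimfunE -fsumEFin// ge0_mule_fsuml; last first.
    by move=> r; rewrite EFinM nnfun_muleindic_ge0.
  over.
rewrite [RHS]ge0_integral_fsum//; last 2 first.
  - move=> r; apply: emeasurable_funM => //.
    exact/measurable_EFinP/measurableT_comp.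
  - by move=> r x _; rewrite mule_ge0 ?EFinM ?nnfun_muleindic_ge0 ?lee_fin.
apply: eq_fsbigr => r _.
have [r0|r0] := ltP r 0%R.
  rewrite preimage_nnfun0// indic0.
  under eq_integral do rewrite mulr0.
  under [RHS]eq_integral do rewrite mulr0 mul0e.
  by rewrite !integral0.
rewrite integralZl_indic_nnsfun.
under [RHS]eq_integral do rewrite EFinM -muleA.
rewrite ge0_integralZl// ?integral_density_indic//.
- by apply: emeasurable_funM => //; exact/measurable_EFinP/measurable_indic.
- by move=> x _; rewrite mule_ge0// lee_fin.
exact: measurableT.
Qed.

Lemma ge0_integral_density (f : T -> \bar R) :
  measurable_fun setT f -> (forall x, 0 <= f x) ->
  \int[nu]_x f x = \int[mu]_x (f x * (p x)%:E).
Proof.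
move=> mf f0; pose f_ := nnsfun_approx measurableT mf.
have cvg_f_ x : (f_ n x)%:E @[n --> \oo] --> f x by exact: cvg_nnsfun_approx.
have nd_f_ x : {homo (fun n => (f_ n x)%:E) : a b / (a <= b)%N >-> a <= b}.
  by move=> a b ab; rewrite lee_fin; exact/lefP/nd_nnsfun_approx.
transitivity (limn (fun n => \int[nu]_x (f_ n x)%:E)).
  rewrite -monotone_convergence//.
  - by apply: eq_integral => x _; exact/esym/cvg_lim.
  - by move=> n; exact/measurable_EFinP/measurable_funP.
  - by move=> n x _; rewrite lee_fin.
under eq_fun do rewrite integral_density_nnsfun.
rewrite -monotone_convergence//.
- by apply: eq_integral => x _; exact/cvg_lim/cvgeZr.
- move=> n; apply: emeasurable_funM => //.
  exact/measurable_EFinP/measurable_funP.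
- by move=> n x _; rewrite mule_ge0// lee_fin.
- by move=> x _ a b ab; rewrite lee_wpmul2r ?lee_fin//; exact: nd_f_.
Qed.

End integral_density.

Section normal_expR_sqr.
Context (R : realType).
Local Notation lebesgue := (@lebesgue_measure R).

Lemma integral_normal_prob (m s : R) (f : R -> \bar R) :
  measurable_fun setT f -> (forall x, (0 <= f x)%E) ->
  (\int[normal_prob m s]_x f x = \int[lebesgue]_x (f x * (normal_pdf m s x)%:E))%E.
Proof.
move=> mf f0; apply: ge0_integral_density => //.
- exact: normal_pdf_ge0.
- exact: measurable_normal_pdf.
Qed.

Lemma expR_sqr_normal_pdf (m s x : R) : 0 < s ->
  expR ((x - m) ^+ 2 / (4 * s ^+ 2)) * normal_pdf m s x =
  Num.sqrt 2 * normal_pdf m (Num.sqrt 2 * s) x.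
Proof.
move=> s0; have s2 : 0 < Num.sqrt 2 :> R by rewrite sqrtr_gt0.
rewrite /normal_pdf gt_eqF// gt_eqF ?mulr_gt0// /normal_peak /normal_fun.
rewrite exprMn sqr_sqrtr//.
have -> : 2 * s ^+ 2 * pi *+ 2 = 2 * (s ^+ 2 * pi *+ 2) by rewrite mulrnAr mulrA.
rewrite sqrtrM ?ler0n//.
have -> : - (x - m) ^+ 2 / (2 * s ^+ 2 *+ 2) =
    (x - m) ^+ 2 / (4 * s ^+ 2) + - (x - m) ^+ 2 / (s ^+ 2 *+ 2).
  move: ((x - m) ^+ 2) => y; field; by rewrite gt_eqF// exprn_gt0.
have A0 : 0 < Num.sqrt (s ^+ 2 * pi *+ 2).
  by rewrite sqrtr_gt0 mulrn_wgt0// mulr_gt0 ?pi_gt0// exprn_gt0.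
rewrite expRD; move: A0 s2; move: (Num.sqrt _) (Num.sqrt 2 : R) => A r A0 r0.
move: (expR _) (expR _) => B C.
by field; rewrite !gt_eqF.
Qed.

Lemma integral_normal_prob_expR_sqr (m s : R) : 0 < s ->
  (\int[normal_prob m s]_x (expR ((x - m) ^+ 2 / (4 * s ^+ 2)))%:E =
   (Num.sqrt 2)%:E)%E.
Proof.
move=> s0; rewrite integral_normal_prob; last 2 first.
- apply/measurable_EFinP; apply: measurableT_comp => //.
  by apply: measurable_funM => //; apply: measurable_funX; exact: measurable_funB.
- by move=> x; rewrite lee_fin expR_ge0.
under eq_integral do rewrite -EFinM expR_sqr_normal_pdf// EFinM.
rewrite ge0_integralZl//.
- by rewrite integral_normal_pdf mule1.
- apply/measurable_EFinP; exact: measurable_normal_pdf.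
- by move=> x _; rewrite lee_fin normal_pdf_ge0.
Qed.

End normal_expR_sqr.

Lemma mx_norm_le_coordP (R : realType) n (x : 'rV[R]_n) (a : R) : 0 <= a ->
  (`|x| <= a) <-> (forall i : 'I_n, `|x ord0 i| <= a).
Proof.
move=> a0; rewrite [`|x|]mx_normrE; split.
  by move=> /bigmax_leP [_ H] i; exact: (H (ord0, i)).
move=> H; apply/bigmax_leP; split => // -[i j] _ /=.
by rewrite (ord1 i); exact: H.
Qed.

Lemma measurable_mx_norm_le (R : realType) n d (T : measurableType d)
    (X : T -> 'rV[R]_n) (mu : 'rV[R]_n) (a : R) :
  random_vector X -> 0 <= a -> measurable [set t | `|X t - mu| <= a].
Proof.
move=> rvX a0.
have -> : [set t | `|X t - mu| <= a] = \bigcap_(i in [set: 'I_n])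
    ((fun t => `|X t ord0 i - mu ord0 i|) @^-1` `]-oo, a]).
  apply/seteqP; split => t /=.
    move=> /(mx_norm_le_coordP _ a0) H i _ /=.
    by rewrite in_itv/=; have := H i; rewrite !mxE.
  move=> H; apply/mx_norm_le_coordP => // i.
  by have := H i I; rewrite /= in_itv/= !mxE.
apply: fin_bigcap_measurable => // i _; rewrite -[X in measurable X]setTI.
by apply: measurableT_comp => //; exact: measurable_funB.
Qed.

Section convexity.
Local Open Scope convex_scope.
Context (R : realType).

Lemma convex_sqr (t : {i01 R}) (a b : R) :
  (t%:num * a + (t%:num).~ * b) ^+ 2 <= t%:num * a ^+ 2 + (t%:num).~ * b ^+ 2.
Proof.
have [t0 t1] : 0 <= t%:num /\ t%:num <= 1 by [].
rewrite /onem -subr_ge0; move: (t%:num) t0 t1 => u u0 u1.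
have -> : u * a ^+ 2 + (1 - u) * b ^+ 2 - (u * a + (1 - u) * b) ^+ 2 =
  u * (1 - u) * (a - b) ^+ 2 by ring.
by rewrite mulr_ge0 ?sqr_ge0// mulr_ge0// subr_ge0.
Qed.

Lemma convex_sum_expR_sqr n (mu : 'rV[R]_n) (k : R) : 0 <= k ->
  convex_function setT
    (fun x : 'rV[R]_n => \sum_(i < n) expR ((x ord0 i - mu ord0 i) ^+ 2 * k) : R^o).
Proof.
move=> k0 t x y _ _.
rewrite convRE mulr_sumr [X in _ <= _ + X]mulr_sumr -big_split /=.
apply: ler_sum => i _.
have -> : (x <|t|> y) ord0 i - mu ord0 i =
    t%:num * (x ord0 i - mu ord0 i) + (t%:num).~ * (y ord0 i - mu ord0 i).
  by rewrite /= !mxE /onem; ring.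
move: (x ord0 i - _) (y ord0 i - _) => a b.
apply: (@le_trans _ _ (expR (t%:num * (a ^+ 2 * k) + (t%:num).~ * (b ^+ 2 * k)))).
  by rewrite ler_expR (mulrA _ (a ^+ 2)) (mulrA _ (b ^+ 2)) -mulrDl ler_wpM2r ?convex_sqr.
by have := convex_expR t (a ^+ 2 * k) (b ^+ 2 * k); rewrite !convRE.
Qed.

End convexity.

Section markov.
Context d (T : measurableType d) (R : realType) (P : probability T R).
Local Open Scope ereal_scope.

Lemma expectation_exists_ge0 (g : T -> R) :
  measurable_fun setT g -> (forall t, (0 <= g t)%R) -> expectation_exists P g.
Proof.
move=> mg g0; split => //; right.
rewrite (eq_integral (fun _ => 0)) ?integral0// => t _.
by rewrite (@ge0_funrnegE _ _ setT) ?in_setT// => x _.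
Qed.

Lemma markov_complement (S : set T) (g : T -> R) (c b : R) :
  measurable S -> measurable_fun setT g -> (0 < c)%R ->
  (forall t, ~ S t -> (c <= g t)%R) -> \int[P]_t `|(g t)%:E| <= b%:E ->
  (1 - b / c)%:E <= P S.
Proof.
move=> mS mg c0 gS Eg.
have mEg : measurable_fun setT (EFin \o g) by exact/measurable_EFinP.
have mcg : measurable [set t | c%:E <= `|(g t)%:E|].
  by rewrite -[X in measurable X]setTI; exact/emeasurable_fun_c_infty/measurableT_comp.
have PSc_le : P (~` S) <= P [set t | c%:E <= `|(g t)%:E|].
  apply: le_measure; rewrite ?inE//; first exact: measurableC.
  by move=> t /gS cg /=; rewrite lee_fin (le_trans cg)// ler_norm.
have := le_integral_abse P measurableT mEg c0.
rewrite setTI => /le_trans/(_ Eg) cPb.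
have [p Pp] : exists p, P (~` S) = p%:E.
  by exists (fine (P (~` S))); rewrite fineK// fin_num_measure//; exact: measurableC.
rewrite -(setCK S) probability_setC; last exact: measurableC.
rewrite Pp lee_fin lerD2l lerN2 ler_pdivlMr// mulrC -lee_fin EFinM -Pp.
by apply: le_trans cPb; rewrite lee_pmul2l ?lte_fin.
Qed.

End markov.

Section sum_expR_sqr.
Context (R : realType) (n : nat) (mu : 'rV[R]_n) (k : R).

Definition sum_expR_sqr (x : 'rV[R]_n) : R :=
  \sum_(i < n) expR ((x ord0 i - mu ord0 i) ^+ 2 * k).

Lemma sum_expR_sqr_ge0 x : 0 <= sum_expR_sqr x.
Proof. by apply: sumr_ge0 => i _; exact: expR_ge0. Qed.

Lemma measurable_sum_expR_sqr d (T : measurableType d) (X : T -> 'rV[R]_n) :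
  random_vector X -> measurable_fun setT (sum_expR_sqr \o X).
Proof.
move=> rvX; apply: measurable_sum => i; apply: measurableT_comp => //.
apply: measurable_funM => //; apply: measurable_funX => //.
exact: measurable_funB.
Qed.

Lemma expectation_exists_sum_expR_sqr d (T : measurableType d)
    (P : probability T R) (X : T -> 'rV[R]_n) :
  random_vector X -> expectation_exists P (sum_expR_sqr \o X).
Proof.
move=> rvX; apply: expectation_exists_ge0 => [|t].
- exact: measurable_sum_expR_sqr.
- exact: sum_expR_sqr_ge0.
Qed.

Lemma expR_sqr_le_sum_expR_sqr (x : 'rV[R]_n) (a : R) : 0 <= a -> 0 <= k ->
  ~ `|x - mu| <= a -> expR (a ^+ 2 * k) <= sum_expR_sqr x.
Proof.
move=> a0 k0 xa.
have [i ai] : exists i, a < `|x ord0 i - mu ord0 i|.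
  apply: contrapT => H; apply/xa/mx_norm_le_coordP => // i.
  by rewrite !mxE leNgt; apply/negP => ?; apply: H; exists i.
rewrite /sum_expR_sqr (bigD1 i)//= -[leLHS]addr0 lerD//; last first.
  by apply: sumr_ge0 => j _; exact: expR_ge0.
rewrite ler_expR ler_wpM2r// -[leRHS]real_normK ?num_real// lerXn2r ?nnegrE//.
exact: ltW.
Qed.

End sum_expR_sqr.

Section gaussian_iso_law.
Context (R : realType) (n : nat) d (T : measurableType d) (Q : probability T R).
Variables (Y : T -> 'rV[R]_n) (mu : 'rV[R]_n) (sigma : R).
Hypothesis HY : gaussian_iso_law Q Y mu sigma.

Lemma gaussian_iso_law_coord (i : 'I_n) (B : set R) : measurable B ->
  Q ((fun t => Y t ord0 i) @^-1` B) = normal_prob (mu ord0 i) sigma B.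
Proof.
case: HY => _ HQ mB; pose A j := if j == i then B else setT.
have -> : (fun t => Y t ord0 i) @^-1` B = [set t | forall j, A j (Y t ord0 j)].
  apply/seteqP; split => t /=; last by move/(_ i); rewrite /A eqxx.
  by move=> Bt j; rewrite /A; case: eqP => // ->.
rewrite HQ => [|j]; last by rewrite /A; case: ifP.
rewrite (bigD1 i)//= /A eqxx big1 ?mule1// => j /negbTE ->.
exact: probability_setT.
Qed.

Lemma integral_gaussian_iso_law_expR_sqr (i : 'I_n) : 0 < sigma ->
  (\int[Q]_t (expR ((Y t ord0 i - mu ord0 i) ^+ 2 / (4 * sigma ^+ 2)))%:E =
   (Num.sqrt 2)%:E)%E.
Proof.
move=> s0; have mYi : measurable_fun setT (fun t => Y t ord0 i : measurableTypeR R).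
  by case: HY => + _; apply.
pose g (x : measurableTypeR R) := (expR ((x - mu ord0 i) ^+ 2 / (4 * sigma ^+ 2)))%:E.
have mg : measurable_fun setT g.
  apply/measurable_EFinP; apply: measurableT_comp => //.
  by apply: measurable_funM => //; apply: measurable_funX; exact: measurable_funB.
rewrite -(@integral_normal_prob_expR_sqr _ (mu ord0 i) sigma s0).
transitivity (\int[pushforward Q (fun t => Y t ord0 i : measurableTypeR R)]_y g y)%E.
  by rewrite ge0_integral_pushforward// => y _; rewrite lee_fin expR_ge0.
rewrite (eq_measure_integral (normal_prob (mu ord0 i) sigma))// => A mA _.
exact: gaussian_iso_law_coord.
Qed.

End gaussian_iso_law.

Lemma integral_gaussian_iso_law_sum_expR_sqr (R : realType) n d
    (T : measurableType d) (Q : probability T R) (Y : T -> 'rV[R]_n)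
    (mu : 'rV[R]_n) (sigma : R) :
  0 < sigma -> gaussian_iso_law Q Y mu sigma ->
  (\int[Q]_t (sum_expR_sqr mu (4 * sigma ^+ 2)^-1 (Y t))%:E =
   (Num.sqrt 2 * n%:R)%:E)%E.
Proof.
move=> s0 HY; rewrite /sum_expR_sqr.
under eq_integral do rewrite -sumEFin.
rewrite ge0_integral_sum//; last first.
  move=> i; apply/measurable_EFinP; apply: measurableT_comp => //.
  apply: measurable_funM => //; apply: measurable_funX => //.
  by apply: measurable_funB => //; case: HY.
under eq_bigr do rewrite (integral_gaussian_iso_law_expR_sqr HY _ s0).
by rewrite sumEFin sumr_const card_ord mulr_natr.
Qed.

Lemma mulr_expR_sqr_sqrt_ln (R : realType) (C g s : R) : 0 < s -> 0 < g <= C ->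
  C * expR (- (2 * s * Num.sqrt (ln (C / g))) ^+ 2 / (4 * s ^+ 2)) = g.
Proof.
move=> s0 /andP[g0 gC]; have C0 : 0 < C := lt_le_trans g0 gC.
have Cg : 1 <= C / g by rewrite ler_pdivlMr// mul1r.
have L0 : 0 <= ln (C / g) by rewrite ln_ge0.
have -> : - (2 * s * Num.sqrt (ln (C / g))) ^+ 2 / (4 * s ^+ 2) = - ln (C / g).
  by rewrite !exprMn sqr_sqrtr//; field; rewrite gt_eqF// exprn_gt0.
rewrite expRN lnK ?posrE ?divr_gt0// invf_div mulrC divfK//.
exact: lt0r_neq0.
Qed.

Section convex_order_gaussian.
Context (R : realType) (n : nat).
Context d (T : measurableType d) (P : probability T R) (X : T -> 'rV[R]_n).
Context d' (T' : measurableType d') (Q : probability T' R) (Y : T' -> 'rV[R]_n).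
Variables (mu : 'rV[R]_n) (sigma : R).
Hypotheses (sigma_gt0 : 0 < sigma) (rvX : random_vector X).
Hypotheses (HY : gaussian_iso_law Q Y mu sigma) (XY : cx_le P X Q Y).

Local Notation F := (sum_expR_sqr mu (4 * sigma ^+ 2)^-1).

Lemma cx_le_gaussian_sum_expR_sqr :
  (\int[P]_t `|(F (X t))%:E| <= (Num.sqrt 2 * n%:R)%:E)%E.
Proof.
under eq_integral do rewrite gee0_abs ?lee_fin ?sum_expR_sqr_ge0//.
rewrite -(integral_gaussian_iso_law_sum_expR_sqr sigma_gt0 HY).
apply: XY; last 2 first.
- exact: expectation_exists_sum_expR_sqr.
- by apply: expectation_exists_sum_expR_sqr; case: HY.
by apply: convex_sum_expR_sqr; rewrite invr_ge0 mulr_ge0// sqr_ge0.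
Qed.

Lemma cx_le_gaussian_mx_norm_le (alpha : R) : 0 <= alpha ->
  ((1 - Num.sqrt 2 * n%:R * expR (- alpha ^+ 2 / (4 * sigma ^+ 2)))%:E
     <= P [set t | (`|X t - mu| <= alpha)%R])%E.
Proof.
move=> alpha0; rewrite mulNr expRN.
apply: markov_complement cx_le_gaussian_sum_expR_sqr.
- exact: measurable_mx_norm_le.
- exact: measurable_sum_expR_sqr.
- exact: expR_gt0.
- move=> t; apply: expR_sqr_le_sum_expR_sqr => //.
  by rewrite invr_ge0 mulr_ge0// sqr_ge0.
Qed.

End convex_order_gaussian.

Theorem mainTheorem13 (R : realType) (n : nat)
    (d : measure_display) (T : measurableType d) (P : probability T R)
    (X : T -> 'rV[R]_n)
    (d' : measure_display) (T' : measurableType d') (Q : probability T' R)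
    (Y : T' -> 'rV[R]_n) (mu : 'rV[R]_n) (sigma : R) :
  0 < sigma ->
  random_vector X ->
  gaussian_iso_law Q Y mu sigma ->
  cx_le P X Q Y ->
  (forall alpha : R, 0 < alpha ->
     ((1 - Num.sqrt 2 * n%:R * expR (- alpha ^+ 2 / (4 * sigma ^+ 2)))%:E
        <= P [set t | (`|X t - mu| <= alpha)%R])%E) /\
  (forall gamma : R, 0 < gamma <= 1 ->
     ((1 - gamma)%:E
        <= P [set t | (`|X t - mu|
                       <= 2 * sigma * Num.sqrt (ln (Num.sqrt 2 * n%:R / gamma)))%R])%E).
Proof.
move=> s0 rvX HY XY; have tail := cx_le_gaussian_mx_norm_le s0 rvX HY XY.
split=> [alpha /ltW|g /andP[g0 g1]]; first exact: tail.
apply: le_trans (tail _ _); last by rewrite !mulr_ge0 ?sqrtr_ge0// ltW.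
rewrite lee_fin lerD2l lerN2.
have [->|n0] := eqVneq n 0%N; first by rewrite mulr0 mul0r ltW.
have s2 : 1 <= Num.sqrt 2 :> R by rewrite -[leLHS]sqrtr1 ler_sqrt// ler1n.
have n1 : 1 <= n%:R :> R by rewrite ler1n lt0n.
rewrite mulr_expR_sqr_sqrt_ln// g0 (le_trans g1)//.
exact: mulr_ege1.
Qed.
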